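(* Let $A\in\mathcal C$, let $U$ be an independent subset of $A$ and $V$ an independent subset of $T$, and let $f:{\rm desc}(U)\to{\rm desc}(V)$ be an isomorphism. Let $Q$ be the set of $q$-element subsets $p\subseteq U$ such that $p$ has a common predecessor in $A$ and $f(p)$ has a common predecessor in $T$. For $p\in Q$ let $w_p$ be a common predecessor of $p$ in $A$ and $w_{f(p)}$ a common predecessor of $f(p)$ in $T$. Put $U'=(U\setminus\bigcup Q)\cup\{w_p: p\in Q\}$ and $V'=(V\setminus\bigcup_{p\in Q}f(p))\cup\{w_{f(p)}:p\in Q\}$. Then: (a) $U'$ and $V'$ are independent subsets of $A$ and $T$ respectively, and the extension $F$ of $f$ which maps $w_p$ to $w_{f(p)}$ for each $p\in Q$ is an isomorphism from ${\rm desc}(U')$ to ${\rm desc}(V')$; (b) if $I\subseteq A$ is disjoint from $U$ and $U\cup I$ is an independent subset of $A$, then $U'\cup I$ is also independent.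
   Context: Fix an integer $q\ge2$; $T=T_q$ is the digraph whose vertices are finite sequences over $\{0,\ldots,q-1\}$ with edges $(\bar w,\bar wi)$. For a digraph, an $s$-arc ($s\ge0$) from $u_0$ to $u_s$ is a sequence $u_0\ldots u_s$ with each $(u_i,u_{i+1})$ an edge and $u_{i-1}\ne u_{i+1}$ for $0<i<s$; ${\rm desc}(u)$ is the set of vertices reachable from $u$ by some $s$-arc, $s\ge0$ (including $u$), and ${\rm desc}(Y)=\bigcup_{y\in Y}{\rm desc}(y)$; descendant sets are considered as induced subdigraphs. A descendant-closed set $B$ is finitely generated if $B={\rm desc}(Z)$ for a finite $Z$. A subset is independent if the descendant sets of any two distinct members are disjoint. A common predecessor of a set $X$ of vertices is a vertex $a$ with $(a,x)$ an edge for all $x\in X$. $\mathcal C$ is the class of digraphs $A$ such that ${\rm desc}(a)\cong T$ for every $a\in A$, $A={\rm desc}(Z)$ for some finite $Z$, and ${\rm desc}(a)\cap{\rm desc}(b)$ is finitely generated for all $a,b\in A$. *)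

From mathcomp Require Import all_boot.
From Stdlib Require List.
Set Implicit Arguments. Unset Strict Implicit. Unset Printing Implicit Defensive.

Section Digraphs.
Variable V : Type.
Variable E : V -> V -> Prop.

Definition sarc (a v : V) : Prop :=
  exists (s : nat) (u : nat -> V),
    [/\ u 0 = a, u s = v,
        (forall i, i < s -> E (u i) (u i.+1)) &
        (forall i, 0 < i -> i < s -> u i.-1 <> u i.+1)].

Definition desc (a : V) : V -> Prop := fun v => sarc a v.

Definition descS (Y : V -> Prop) : V -> Prop :=
  fun v => exists y, Y y /\ desc y v.

Definition descL (Z : seq V) : V -> Prop :=
  fun v => exists z, Stdlib.Lists.List.In z Z /\ desc z v.

Definition fin_gen (B : V -> Prop) : Prop :=
  exists Z : seq V, forall v, B v <-> descL Z v.

Definition independent (X : V -> Prop) : Prop :=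
  forall x y, X x -> X y -> x <> y -> forall v, desc x v -> desc y v -> False.

Definition common_pred (X : V -> Prop) (a : V) : Prop :=
  forall x, X x -> E a x.

End Digraphs.

Definition card_eq (V : Type) (n : nat) (X : V -> Prop) : Prop :=
  exists l : seq V, [/\ Stdlib.Lists.List.NoDup l, size l = n & forall x, X x <-> Stdlib.Lists.List.In x l].

Definition img (A B : Type) (f : A -> B) (X : A -> Prop) : B -> Prop :=
  fun y => exists x, X x /\ f x = y.

Definition iso_on (A B : Type) (EA : A -> A -> Prop) (X : A -> Prop)
    (EB : B -> B -> Prop) (Y : B -> Prop) (g : A -> B) : Prop :=
  [/\ (forall x, X x -> Y (g x)),
      (forall x y, X x -> X y -> g x = g y -> x = y),
      (forall y, Y y -> exists x, X x /\ g x = y) &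
      (forall x y, X x -> X y -> (EA x y <-> EB (g x) (g y)))].

Definition Tvert (q : nat) := seq 'I_q.
Definition Tedge (q : nat) (w v : Tvert q) : Prop := exists i : 'I_q, v = rcons w i.

Definition inC (q : nat) (A : Type) (EA : A -> A -> Prop) : Prop :=
  [/\ (forall a : A, exists g : A -> Tvert q,
          iso_on EA (desc EA a) (@Tedge q) (fun _ => True) g),
      (exists Z : seq A, forall v, descL EA Z v) &
      (forall a b : A, fin_gen EA (fun v => desc EA a v /\ desc EA b v))].

Definition Qset (A B : Type) (EA : A -> A -> Prop) (EB : B -> B -> Prop)
    (q : nat) (f : A -> B) (U : A -> Prop) (p : A -> Prop) : Prop :=
  [/\ card_eq q p, (forall x, p x -> U x),
      (exists a, common_pred EA p a) & (exists b, common_pred EB (img f p) b)].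

From mathcomp Require Import all_boot zify.
From Stdlib Require Import Relations RelationClasses ClassicalEpsilon
  FunctionalExtensionality PropExtensionality.
From Stdlib Require List.
Set Implicit Arguments. Unset Strict Implicit. Unset Printing Implicit Defensive.

(* Every [desc(a)] is a copy of [T], where a vertex has exactly [q] children; so a
   [q]-set with a common predecessor is the full set of children of it.  Hence
   [w p] has children exactly [p], [w' p] has children exactly [f(p)], and since
   parents in [T] are unique, distinct members of [Q] are disjoint.  Replacing
   the blocks of an independent set by their parents keeps it independent: a
   block has two elements, so its parent lies below no member.  On the new
   parents [f] extends edge by edge to an isomorphism of the enlarged
   descendant sets.  Part (b) is the same replacement performed in [U ∪ I]. *)

Section Reachability.
Variables (V : Type) (E : V -> V -> Prop).
Local Notation RT := (clos_refl_trans V E).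

Lemma desc_refl a : desc E a a.
Proof. by exists 0, (fun _ => a). Qed.

Lemma desc_edge a b : E a b -> desc E a b.
Proof. by move=> Eab; exists 1, (fun i => if i is 0 then a else b); split=> // -[]. Qed.

Lemma descS_sub X x : X x -> descS E X x.
Proof. by move=> Xx; exists x; split; last exact: desc_refl. Qed.

Hypothesis E_asym : Asymmetric E.

(* Asymmetry is exactly what makes every walk an s-arc: a walk can only revisit
   [u_(i-1)] at step [i+1] along a 2-cycle. *)
Lemma desc_rt a v : desc E a v <-> RT a v.
Proof.
split.
- move=> [s [u [u0 us uE _]]]; rewrite -us -u0.
  elim: s {us} => [|s IH] in uE *; first exact: rt_refl.
  apply: rt_trans (rt_step _ _ _ _ (uE s _)) => //.
  by apply: IH => i lt_is; apply: uE; apply: ltnW.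
- rewrite clos_rt_rt1n_iff.
  elim=> [x | x y z Exy _ [s [u [u0 us uE uN]]]]; first exact: desc_refl.
  exists s.+1, (fun i => if i is i'.+1 then u i' else x); split=> //.
  + by case=> [|i] lt_is /=; [rewrite u0 | apply: uE].
  + case=> [|[|i]] // _ lt_is /=; last exact: (uN i.+1).
    by move=> xu1; apply: (E_asym Exy); rewrite xu1 -u0; apply: uE.
Qed.

Lemma desc_trans a b v : desc E a b -> desc E b v -> desc E a v.
Proof. by rewrite !desc_rt; apply: rt_trans. Qed.

Lemma desc_first a v : desc E a v -> a = v \/ exists2 c, E a c & desc E c v.
Proof.
rewrite desc_rt clos_rt_rt1n_iff => -[|c z Ec cv]; first by left.
by right; exists c => //; rewrite desc_rt clos_rt_rt1n_iff.
Qed.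

Lemma desc_last a v : desc E a v -> a = v \/ exists2 c, desc E a c & E c v.
Proof.
rewrite desc_rt clos_rt_rtn1_iff => -[|c z Ec ac]; first by left.
by right; exists c => //; rewrite desc_rt clos_rt_rtn1_iff.
Qed.

Lemma descS_edge X x y : descS E X x -> E x y -> descS E X y.
Proof.
by move=> [u [Xu ux]] Exy; exists u; split; last exact: desc_trans ux (desc_edge Exy).
Qed.

End Reachability.

Lemma pred_ext (X : Type) (p p' : X -> Prop) : (forall x, p x <-> p' x) -> p = p'.
Proof.
by move=> pp'; apply: functional_extensionality => x; apply: propositional_extensionality.
Qed.

Lemma img_inj (A B : Type) (f : A -> B) (D p p' : A -> Prop) :
  (forall x y, D x -> D y -> f x = f y -> x = y) ->
  (forall x, p x -> D x) -> (forall x, p' x -> D x) ->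
  (forall y, img f p y <-> img f p' y) -> p = p'.
Proof.
move=> f_inj pD p'D pp'; apply: pred_ext => x; split=> px.
- have [x' [p'x' fx'x]] := (pp' (f x)).1 (ex_intro _ x (conj px erefl)).
  by rewrite -(f_inj x' x (p'D _ p'x') (pD _ px) fx'x).
- have [x' [px' fx'x]] := (pp' (f x)).2 (ex_intro _ x (conj px erefl)).
  by rewrite -(f_inj x' x (pD _ px') (p'D _ px) fx'x).
Qed.

Lemma List_mapE (X Y : Type) (h : X -> Y) (s : seq X) : List.map h s = map h s.
Proof. by elim: s => //= x s ->. Qed.

Lemma In_mem (T : eqType) (s : seq T) x : List.In x s <-> x \in s.
Proof.
elim: s => //= y s IH; rewrite in_cons IH.
by split=> [[->|->]|/orP[/eqP->|]]; rewrite ?eqxx ?orbT; auto.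
Qed.

Lemma NoDup_uniq (T : eqType) (s : seq T) : List.NoDup s -> uniq s.
Proof.
elim: s => //= x s IH /List.NoDup_cons_iff[xNs /IH ->].
by rewrite andbT; apply/negP => /In_mem.
Qed.

Lemma card_eq_img (X Y : Type) (n : nat) (f : X -> Y) (p : X -> Prop) :
  card_eq n p -> (forall x y, p x -> p y -> f x = f y -> x = y) ->
  card_eq n (img f p).
Proof.
move=> [l [l_nodup l_size l_p]] f_inj.
exists (List.map f l); split.
- by apply: List.NoDup_map_NoDup_ForallPairs => // x y /l_p px /l_p py; apply: f_inj.
- by rewrite List_mapE size_map.
- move=> y; rewrite List.in_map_iff.
  split=> [[x [px <-]] | [x [<- lx]]]; exists x; split=> //; exact/l_p.
Qed.

Lemma card_eq_onto_ord (X : Type) (n : nat) (p : X -> Prop) (h : X -> 'I_n) :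
  card_eq n p -> (forall x y, p x -> p y -> h x = h y -> x = y) ->
  forall j, exists2 x, p x & h x = j.
Proof.
move=> [l [l_nodup l_size l_p]] h_inj j.
have hl_uniq : uniq (map h l).
  rewrite -List_mapE; apply/NoDup_uniq/List.NoDup_map_NoDup_ForallPairs => //.
  by move=> x y /l_p px /l_p py; apply: h_inj.
have [|_ hl_enum] := uniq_min_size hl_uniq (s2 := enum 'I_n) (fun i _ => mem_enum _ i).
  by rewrite size_enum_ord size_map l_size.
have : j \in enum 'I_n by rewrite mem_enum.
rewrite -hl_enum -List_mapE.
by move/In_mem/List.in_map_iff => [x [hx lx]]; exists x; first exact/l_p.
Qed.

Lemma card_eq_avoid (X : Type) (n : nat) (p : X -> Prop) :
  1 < n -> card_eq n p -> forall x, exists2 y, p y & y <> x.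
Proof.
move=> lt1n [[|a [|b l]] [l_nodup l_size l_p]] x; rewrite -?l_size // in lt1n.
have ab : a <> b by move: l_nodup => /List.NoDup_cons_iff[aNbl _] ab; apply: aNbl; left.
have [-> | xa] := classic (x = a).
- by exists b; [apply/l_p; right; left | move=> ba; apply: ab].
- by exists a; [apply/l_p; left | move=> ax; apply: xa].
Qed.

Section Tree.
Variable q : nat.
Local Notation Tedge := (@Tedge q).

Lemma Tedge_size s t : Tedge s t -> size t = (size s).+1.
Proof. by move=> [i ->]; rewrite size_rcons. Qed.

Lemma Tedge_asym : Asymmetric Tedge.
Proof. move=> s t /Tedge_size st /Tedge_size ts; lia. Qed.

Lemma Tedge_parent_inj s s' t : Tedge s t -> Tedge s' t -> s = s'.
Proof. by move=> [i ->] [i' /rcons_inj[]]. Qed.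

Lemma Tdesc_size s t : desc Tedge s t -> size s <= size t.
Proof.
rewrite (desc_rt Tedge_asym) clos_rt_rtn1_iff.
by elim=> // u v /Tedge_size -> _ /leqW.
Qed.

Lemma Tchildren (P : Tvert q -> Prop) b :
  card_eq q P -> common_pred Tedge P b -> forall t, Tedge b t -> P t.
Proof.
move=> cardP bP t [j ->].
have rcons_last x : P x -> x = rcons b (last j x) by move=> /bP[i ->]; rewrite last_rcons.
have last_inj x y : P x -> P y -> last j x = last j y -> x = y.
  by move=> Px Py xy; rewrite (rcons_last x Px) (rcons_last y Py) xy.
by have [x Px <-] := card_eq_onto_ord cardP last_inj j; rewrite -rcons_last.
Qed.

End Tree.

Arguments Tedge_asym {q}.

Section ClassC.
Variables (q : nat) (A : Type) (EA : A -> A -> Prop).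
Hypothesis desc_isoT : forall a : A, exists g : A -> Tvert q,
  iso_on EA (desc EA a) (@Tedge q) (fun _ => True) g.

Lemma inC_asym : Asymmetric EA.
Proof.
move=> x y Exy Eyx; have [g [_ _ _ gE]] := desc_isoT x.
have [dxx dxy] := (desc_refl EA x, desc_edge Exy).
exact: Tedge_asym ((gE x y dxx dxy).1 Exy) ((gE y x dxy dxx).1 Eyx).
Qed.

Lemma inC_acyclic a y : desc EA a y -> EA y a -> False.
Proof.
move=> ay Eya; have [g [_ _ _ gE]] := desc_isoT a.
have ga_gy : desc (@Tedge q) (g a) (g y).
  move: ay; rewrite (desc_rt inC_asym) clos_rt_rtn1_iff.
  elim=> [|u v Euv au IH]; first exact: desc_refl.
  have dau : desc EA a u by rewrite (desc_rt inC_asym) clos_rt_rtn1_iff.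
  have dav := desc_trans inC_asym dau (desc_edge Euv).
  exact: (desc_trans Tedge_asym IH (desc_edge ((gE u v dau dav).1 Euv))).
have := Tdesc_size ga_gy.
by rewrite (Tedge_size ((gE y a ay (desc_refl EA a)).1 Eya)) ltnn.
Qed.

Lemma inC_children (p : A -> Prop) a :
  card_eq q p -> common_pred EA p a -> forall y, EA a y -> p y.
Proof.
move=> cardp ap y Eay; have [g [_ g_inj _ gE]] := desc_isoT a.
have da x : EA a x -> desc EA a x := @desc_edge _ _ _ _.
have cardgp : card_eq q (img g p).
  apply: card_eq_img cardp _ => x x' px px'; apply: g_inj; apply: da; exact: ap.
have ga_gp : common_pred (@Tedge q) (img g p) (g a).
  by move=> _ [x [px <-]]; apply/(gE _ _ (desc_refl EA a) (da _ (ap _ px))); apply: ap.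
have [x [px gxy]] := Tchildren cardgp ga_gp ((gE _ _ (desc_refl EA a) (da _ Eay)).1 Eay).
by rewrite -(g_inj x y) //; apply: da; [apply: ap | ].
Qed.

End ClassC.

Definition lift_blocks (V K : Type) (X : V -> Prop) (P : K -> Prop)
    (block : K -> V -> Prop) (c : K -> V) : V -> Prop :=
  fun x => (X x /\ ~ (exists k, P k /\ block k x)) \/ (exists k, P k /\ x = c k).

Section LiftBlocks.
Variables (V : Type) (E : V -> V -> Prop) (K : Type).
Variables (X : V -> Prop) (P : K -> Prop) (block : K -> V -> Prop) (c : K -> V).
Hypothesis E_asym : Asymmetric E.
Hypothesis block_sub : forall k x, P k -> block k x -> X x.
Hypothesis c_children : forall k y, P k -> E (c k) y <-> block k y.

Lemma desc_c k z :
  P k -> desc E (c k) z -> z = c k \/ exists2 u, block k u & desc E u z.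
Proof.
move=> Pk /(desc_first E_asym)[<- | [u /(c_children _ Pk) bu uz]]; first by left.
by right; exists u.
Qed.

Lemma descS_lift_blocks z :
  descS E (lift_blocks X P block c) z <-> descS E X z \/ exists k, P k /\ z = c k.
Proof.
split.
- move=> [u [[[Xu _] | [k [Pk ->]]] uz]]; first by left; exists u.
  have [-> | [u' bu' u'z]] := desc_c Pk uz; first by right; exists k.
  by left; exists u'; split; first exact: block_sub bu'.
- move=> [[u [Xu uz]] | [k [Pk ->]]].
    2: by exists (c k); split; [right; exists k | apply: desc_refl].
  have [[k [Pk bu]] | nbu] := classic (exists k, P k /\ block k u).
  + exists (c k); split; first by right; exists k.
    exact: (desc_trans E_asym (desc_edge ((c_children u Pk).2 bu)) uz).
  + by exists u; split; first left.
Qed.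

Hypothesis X_indep : independent E X.
Hypothesis block_avoid : forall k x, P k -> exists2 y, block k y & y <> x.

Lemma c_notin_descS k : P k -> ~ descS E X (c k).
Proof.
move=> Pk [u [Xu uck]]; have [y ky yu] := block_avoid u Pk.
apply: (X_indep Xu (block_sub Pk ky) (nesym yu) _ (desc_refl E y)).
exact: (desc_trans E_asym uck (desc_edge ((c_children y Pk).2 ky))).
Qed.

Hypothesis block_overlap :
  forall k k' x, P k -> P k' -> block k x -> block k' x -> c k = c k'.

Lemma independent_lift_blocks : independent E (lift_blocks X P block c).
Proof.
have root_c u k z : X u -> ~ (exists k, P k /\ block k u) -> P k ->
    desc E u z -> desc E (c k) z -> False.
  move=> Xu nbu Pk uz /(desc_c Pk)[zck | [u' bu' u'z]].
  - by apply: (c_notin_descS Pk); exists u; rewrite -zck.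
  - apply: (X_indep Xu (block_sub Pk bu') _ uz u'z) => uu'.
    by apply: nbu; exists k; rewrite uu'.
have c_c k k' z : P k -> P k' -> c k <> c k' -> desc E (c k) z -> desc E (c k') z -> False.
  move=> Pk Pk' ckk' /(desc_c Pk)[-> | [u bu uz]].
  - move=> /(desc_c Pk')[// | [u' bu' u'ck]].
    by apply: (c_notin_descS Pk); exists u'; split; first exact: block_sub bu'.
  - move=> /(desc_c Pk')[zck' | [u' bu' u'z]].
      by apply: (c_notin_descS Pk'); exists u; rewrite -zck'; split; first exact: block_sub bu.
    have [uu' | uu'] := classic (u = u').
      by apply: ckk'; apply: (block_overlap Pk Pk' bu); rewrite uu'.
    exact: (X_indep (block_sub Pk bu) (block_sub Pk' bu') uu' uz u'z).
move=> x y [[Xx nbx] | [k [Pk ->]]] [[Xy nby] | [k' [Pk' ->]]] xy z xz yz.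
- exact: (X_indep Xx Xy xy xz yz).
- exact: root_c Xx nbx Pk' xz yz.
- exact: root_c Xy nby Pk yz xz.
- exact: c_c Pk Pk' xy xz yz.
Qed.

End LiftBlocks.

Definition extend_at (A B K : Type) (f : A -> B) (P : K -> Prop)
    (c : K -> A) (c' : K -> B) (x : A) : B :=
  match excluded_middle_informative (exists k, P k /\ x = c k) with
  | left ex => c' (proj1_sig (constructive_indefinite_description _ ex))
  | right _ => f x
  end.

Lemma extend_at_old (A B K : Type) (f : A -> B) (P : K -> Prop) c c' x :
  ~ (exists k, P k /\ x = c k) -> extend_at f P c c' x = f x.
Proof. by rewrite /extend_at; case: excluded_middle_informative. Qed.

Lemma extend_at_new (A B K : Type) (f : A -> B) (P : K -> Prop) c c' k :
  (forall k k', P k -> P k' -> c k = c k' -> c' k = c' k') ->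
  P k -> extend_at f P c c' (c k) = c' k.
Proof.
move=> cc' Pk; rewrite /extend_at.
case: excluded_middle_informative => [ex | []]; last by exists k.
by case: constructive_indefinite_description => k' /= [Pk' ckk']; apply: cc' (esym ckk').
Qed.

Section ExtendIso.
Variables (A B : Type) (EA : A -> A -> Prop) (EB : B -> B -> Prop).
Hypotheses (EA_asym : Asymmetric EA) (EB_asym : Asymmetric EB).
Variables (X : A -> Prop) (Y : B -> Prop) (f : A -> B).
Hypothesis f_iso : iso_on EA (descS EA X) EB (descS EB Y) f.
Hypothesis f_roots : forall x, X x -> Y (f x).
Variables (P : (A -> Prop) -> Prop) (c : (A -> Prop) -> A) (c' : (A -> Prop) -> B).
Hypothesis block_sub : forall p x, P p -> p x -> X x.
Hypothesis c_children : forall p y, P p -> EA (c p) y <-> p y.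
Hypothesis c'_children : forall p y, P p -> EB (c' p) y <-> img f p y.
Hypothesis c_new : forall p, P p -> ~ descS EA X (c p).
Hypothesis c'_new : forall p, P p -> ~ descS EB Y (c' p).

Local Notation F := (extend_at f P c c').
Local Notation X' := (lift_blocks X P (fun p => p) c).
Local Notation Y' := (lift_blocks Y P (img f) c').

Let f_inj x y : descS EA X x -> descS EA X y -> f x = f y -> x = y.
Proof. by case: f_iso => _ inj _ _; apply: inj. Qed.

Let block_descS p x : P p -> p x -> descS EA X x.
Proof. by move=> Pp px; apply/descS_sub/(block_sub Pp). Qed.

Lemma c'_inj p p' : P p -> P p' -> c' p = c' p' -> p = p'.
Proof.
move=> Pp Pp' cpp'.
apply: (img_inj f_inj (fun x => block_descS Pp) (fun x => block_descS Pp')) => y.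
by rewrite -(c'_children y Pp) -(c'_children y Pp') cpp'.
Qed.

Lemma extend_at_descS x : descS EA X x -> F x = f x.
Proof.
by move=> Dx; apply: extend_at_old => -[p [Pp xcp]]; apply: (c_new Pp); rewrite -xcp.
Qed.

Lemma extend_at_block p : P p -> F (c p) = c' p.
Proof.
apply: extend_at_new => k k' Pk Pk' ckk'; congr c'; apply: pred_ext => y.
by rewrite -(c_children y Pk) -(c_children y Pk') ckk'.
Qed.

Let descS_X' z : descS EA X' z <-> descS EA X z \/ exists p, P p /\ z = c p.
Proof. exact: descS_lift_blocks. Qed.

Let descS_Y' z : descS EB Y' z <-> descS EB Y z \/ exists p, P p /\ z = c' p.
Proof. by apply: descS_lift_blocks => // p _ Pp [x [px <-]]; apply/f_roots/(block_sub Pp). Qed.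

Lemma extend_at_edge x y : descS EA X' x -> descS EA X' y -> EA x y <-> EB (F x) (F y).
Proof.
have [fD _ _ fE] := f_iso.
move=> /descS_X'[Dx | [p [Pp ->]]] /descS_X'[Dy | [p' [Pp' ->]]].
- by rewrite !extend_at_descS //; apply: fE.
- rewrite (extend_at_descS Dx) extend_at_block //; split=> e; exfalso.
  + exact: (c_new Pp') (descS_edge EA_asym Dx e).
  + exact: (c'_new Pp') (descS_edge EB_asym (fD x Dx) e).
- rewrite (extend_at_descS Dy) extend_at_block // c_children // c'_children //.
  split=> [py | [u [pu fuy]]]; first by exists y.
  by rewrite -(f_inj (block_descS Pp pu) Dy fuy).
- rewrite !extend_at_block // c_children // c'_children //.
  split=> [pcp' | [u [pu fucp']]]; exfalso.
  + exact: (c_new Pp') (block_descS Pp pcp').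
  + by apply: (c'_new Pp'); rewrite -fucp'; apply/fD/(block_descS Pp).
Qed.

Lemma iso_on_extend_at : iso_on EA (descS EA X') EB (descS EB Y') F.
Proof.
have [fD _ fS _] := f_iso.
split; last exact: extend_at_edge.
- move=> x /descS_X'[Dx | [p [Pp ->]]]; apply/descS_Y'.
    by left; rewrite extend_at_descS //; apply: fD.
  by right; exists p; rewrite extend_at_block.
- move=> x y /descS_X'[Dx | [p [Pp ->]]] /descS_X'[Dy | [p' [Pp' ->]]].
  + by rewrite !extend_at_descS //; apply: f_inj.
  + rewrite (extend_at_descS Dx) extend_at_block // => fxcp'.
    by case: (c'_new Pp'); rewrite -fxcp'; apply: fD.
  + rewrite (extend_at_descS Dy) extend_at_block // => cpfy.
    by case: (c'_new Pp); rewrite cpfy; apply: fD.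
  + by rewrite !extend_at_block // => /(c'_inj Pp Pp') ->.
- move=> y /descS_Y'[/fS[x [Dx <-]] | [p [Pp ->]]].
    by exists x; split; [apply/descS_X'; left | apply: extend_at_descS].
  by exists (c p); split; [apply/descS_X'; right; exists p | apply: extend_at_block].
Qed.

End ExtendIso.

Section CommonPredecessors.
Variables (q : nat) (A : Type) (EA : A -> A -> Prop).
Hypotheses (hq : 2 <= q) (hA : inC q EA).
Variables (U : A -> Prop) (V : Tvert q -> Prop) (f : A -> Tvert q).
Hypotheses (hU : independent EA U) (hV : independent (@Tedge q) V).
Hypothesis hf : iso_on EA (descS EA U) (@Tedge q) (descS (@Tedge q) V) f.
Variables (w : (A -> Prop) -> A) (w' : (A -> Prop) -> Tvert q).
Local Notation Q := (Qset EA (@Tedge q) q f U).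
Hypothesis hw : forall p, Q p -> common_pred EA p (w p).
Hypothesis hw' : forall p, Q p -> common_pred (@Tedge q) (img f p) (w' p).

Let desc_isoT := let: And3 h _ _ := hA in h.
Let EA_asym : Asymmetric EA := inC_asym desc_isoT.

Let f_inj x y : descS EA U x -> descS EA U y -> f x = f y -> x = y.
Proof. by case: hf => _ inj _ _; apply: inj. Qed.

Let Q_sub p x : Q p -> p x -> U x.
Proof. by case=> _ pU _ _; apply: pU. Qed.

Let Q_descS p x : Q p -> p x -> descS EA U x.
Proof. by move=> Qp px; apply/descS_sub/(Q_sub Qp). Qed.

(* A parent of [f u] in [desc(V)] would pull back to a parent of [u] in
   [desc(U)], against independence of [U] or acyclicity of [A]. *)
Lemma f_roots u : U u -> V (f u).
Proof.
move=> Uu; have [fD _ fS fE] := hf.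
have [v [Vv vfu]] := fD u (descS_sub EA Uu).
have [<- // | [z vz zfu]] := desc_last Tedge_asym vfu.
have [y [[u' [Uu' u'y]] fyz]] := fS z (ex_intro _ v (conj Vv vz)).
have Eyu : EA y u.
  by apply/(fE y u); [exists u' | apply: descS_sub | rewrite fyz].
have u'u : desc EA u' u := desc_trans EA_asym u'y (desc_edge Eyu).
exfalso; have [u'_eq_u | u'_neq_u] := classic (u' = u).
- by apply: (inC_acyclic desc_isoT _ Eyu); rewrite -u'_eq_u.
- exact: (hU Uu' Uu u'_neq_u u'u (desc_refl EA u)).
Qed.

Lemma w_children p y : Q p -> EA (w p) y <-> p y.
Proof.
move=> Qp; split; last exact: hw.
by have [cardp _ _ _] := Qp; apply: (inC_children desc_isoT cardp (hw Qp)).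
Qed.

Lemma Q_card_img p : Q p -> card_eq q (img f p).
Proof.
move=> Qp; have [cardp _ _ _] := Qp.
by apply: card_eq_img cardp _ => x y px py; apply: f_inj; apply: Q_descS Qp _.
Qed.

Lemma w'_children p t : Q p -> @Tedge q (w' p) t <-> img f p t.
Proof. by move=> Qp; split; [exact: (Tchildren (Q_card_img Qp) (hw' Qp)) | apply: hw']. Qed.

Lemma Q_avoid p x : Q p -> exists2 y, p y & y <> x.
Proof. by case=> cardp _ _ _; apply: card_eq_avoid hq cardp x. Qed.

Lemma Q_img_avoid p t : Q p -> exists2 y, img f p y & y <> t.
Proof. by move=> Qp; apply: card_eq_avoid hq (Q_card_img Qp) t. Qed.

Lemma Q_img_overlap p p' t : Q p -> Q p' -> img f p t -> img f p' t -> w' p = w' p'.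
Proof.
by move=> Qp Qp' /(w'_children _ Qp) ept /(w'_children _ Qp'); apply: Tedge_parent_inj.
Qed.

Lemma Q_overlap p p' x : Q p -> Q p' -> p x -> p' x -> w p = w p'.
Proof.
move=> Qp Qp' px p'x; congr w.
have ww' := Q_img_overlap Qp Qp' (ex_intro _ x (conj px erefl)) (ex_intro _ x (conj p'x erefl)).
apply: (img_inj f_inj (fun y => Q_descS Qp) (fun y => Q_descS Qp')) => t.
by rewrite -(w'_children t Qp) -(w'_children t Qp') ww'.
Qed.

Local Notation U' := (lift_blocks U Q (fun p => p) w).
Local Notation V' := (lift_blocks V Q (img f) w').

Let Q_img_sub p t : Q p -> img f p t -> V t.
Proof. by move=> Qp [x [px <-]]; apply/f_roots/(Q_sub Qp). Qed.

Lemma independent_lift_U : independent EA U'.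
Proof. exact: (independent_lift_blocks EA_asym Q_sub w_children hU Q_avoid Q_overlap). Qed.

Lemma independent_lift_V : independent (@Tedge q) V'.
Proof.
exact: (independent_lift_blocks Tedge_asym Q_img_sub w'_children hV Q_img_avoid Q_img_overlap).
Qed.

Lemma iso_lift : exists F : A -> Tvert q,
  [/\ (forall x, descS EA U x -> F x = f x), (forall p, Q p -> F (w p) = w' p) &
      iso_on EA (descS EA U') (@Tedge q) (descS (@Tedge q) V') F].
Proof.
have w_new := c_notin_descS EA_asym Q_sub w_children hU Q_avoid.
have w'_new := c_notin_descS Tedge_asym Q_img_sub w'_children hV Q_img_avoid.
exists (extend_at f Q w w'); split.
- exact: extend_at_descS w_new.
- exact: extend_at_block w_children.
- exact: (iso_on_extend_at EA_asym Tedge_asym hf f_roots Q_sub w_children w'_children w_new w'_new).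
Qed.

Lemma independent_lift_union (I : A -> Prop) :
  (forall x, I x -> ~ U x) -> independent EA (fun x => U x \/ I x) ->
  independent EA (fun x => U' x \/ I x).
Proof.
move=> IU UI_indep.
have -> : (fun x => U' x \/ I x) = lift_blocks (fun x => U x \/ I x) Q (fun p => p) w.
  apply: pred_ext => x; have nQI : I x -> ~ exists p, Q p /\ p x.
    by move=> Ix [p [Qp px]]; apply: IU Ix (Q_sub Qp px).
  rewrite /lift_blocks; tauto.
apply: (independent_lift_blocks EA_asym _ w_children UI_indep Q_avoid Q_overlap).
by move=> p x Qp px; left; apply: Q_sub Qp px.
Qed.

End CommonPredecessors.

Theorem lemma3p2 (q : nat) (hq : 2 <= q)
  (A : Type) (EA : A -> A -> Prop) (hA : inC q EA)
  (U : A -> Prop) (V : Tvert q -> Prop)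
  (hU : independent EA U) (hV : independent (@Tedge q) V)
  (f : A -> Tvert q)
  (hf : iso_on EA (descS EA U) (@Tedge q) (descS (@Tedge q) V) f)
  (w : (A -> Prop) -> A) (w' : (A -> Prop) -> Tvert q)
  (hw : forall p, Qset EA (@Tedge q) q f U p -> common_pred EA p (w p))
  (hw' : forall p, Qset EA (@Tedge q) q f U p ->
           common_pred (@Tedge q) (img f p) (w' p)) :
  let Q := Qset EA (@Tedge q) q f U in
  let U' := fun x => (U x /\ ~ (exists p, Q p /\ p x)) \/
                     (exists p, Q p /\ x = w p) in
  let V' := fun y => (V y /\ ~ (exists p, Q p /\ img f p y)) \/
                     (exists p, Q p /\ y = w' p) in
  (independent EA U' /\ independent (@Tedge q) V' /\
   exists F : A -> Tvert q,
     [/\ (forall x, descS EA U x -> F x = f x),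
         (forall p, Q p -> F (w p) = w' p) &
         iso_on EA (descS EA U') (@Tedge q) (descS (@Tedge q) V') F]) /\
  (forall I : A -> Prop, (forall x, I x -> ~ U x) ->
     independent EA (fun x => U x \/ I x) ->
     independent EA (fun x => U' x \/ I x)).
Proof.
move=> Q U' V'; split; [split; [|split] | move=> I].
- exact: (independent_lift_U hq hA hU hf hw hw').
- exact: (independent_lift_V hq hA hU hV hf hw').
- exact: (iso_lift hq hA hU hV hf hw hw').
- exact: (independent_lift_union hq hA hf hw hw').
Qed.
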